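(* An $\mathbb{F}_q$-linear automorphism $\varphi$ of $\mathbb{F}_{q^m}$ is fully linear over $\mathbb{F}_{q^m}$ if and only if there exist $\beta\in\mathbb{F}_{q^m}^*$ and $j\in\{0,1,\dots,m-1\}$ such that $\varphi(\mu)=\beta\,\mu^{q^j}$ for all $\mu\in\mathbb{F}_{q^m}$.
   Context: $q$ is a prime power (the paper takes $q$ a power of $2$). An $\mathbb{F}_q$-linear automorphism of $\mathbb{F}_{q^m}$ is a bijective $\mathbb{F}_q$-linear map $\varphi:\mathbb{F}_{q^m}\to\mathbb{F}_{q^m}$, applied componentwise to vectors. For an $\mathbb{F}_{q^m}$-linear code $\mathcal{C}\subseteq\mathbb{F}_{q^m}^n$, $\varphi$ is linear on $\mathcal{C}$ if $\varphi(\mathcal{C})=\{\varphi(\bm{c}):\bm{c}\in\mathcal{C}\}$ is an $\mathbb{F}_{q^m}$-linear subspace. $\varphi$ is fully linear over $\mathbb{F}_{q^m}$ if it is linear on every $\mathbb{F}_{q^m}$-linear code of every length $n\ge1$. *)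

From HB Require Import structures.
From mathcomp Require Import all_boot all_order all_algebra all_field.
Set Implicit Arguments. Unset Strict Implicit. Unset Printing Implicit Defensive.
Import GRing.Theory.
Local Open Scope ring_scope.

(* Setting: F = F_q is a finite field, L = F_{q^m} is a finite-dimensional
   field extension of F, with m = \dim_F L and q = #|F|. *)

Definition Fq_lin_aut (F : finFieldType) (L : fieldExtType F) (phi : L -> L) :=
  (forall (a : F) (x y : L), phi (a *: x + y) = a *: phi x + phi y)
  /\ bijective phi.

Definition cwise (L : fieldType) (n : nat) (phi : L -> L) (c : 'rV[L]_n) : 'rV[L]_n :=
  map_mx phi c.

Definition linear_on (L : fieldType) (n : nat) (phi : L -> L)
    (C : {vspace 'rV[L]_n}) :=
  exists D : {vspace 'rV[L]_n},
    forall v : 'rV[L]_n, v \in D <-> exists2 c, c \in C & v = cwise phi c.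

Definition fully_linear (L : fieldType) (phi : L -> L) :=
  forall n : nat, (0 < n)%N -> forall C : {vspace 'rV[L]_n}, linear_on phi C.

From HB Require Import structures.
From mathcomp Require Import all_boot all_order all_algebra all_fingroup all_field.
Set Implicit Arguments. Unset Strict Implicit. Unset Printing Implicit Defensive.
Import GRing.Theory.
Local Open Scope ring_scope.

(* The proof rests on two
   facts about maps phi : L -> L.
   - Sufficiency: if phi is semilinear for a field automorphism tau, i.e.
     phi (a x + y) = tau a * phi x + phi y, then the componentwise image of an
     L-subspace C of L^n is the L-span of the images of a basis of C, hence an
     L-subspace.  The map mu |-> beta mu^(q^j) is semilinear for the Galois
     automorphism mu |-> mu^(q^j).
   - Necessity: linearity on the one-dimensional codes spanned by (1, a)
     forces phi (l a) phi 1 = phi l phi a, so psi := phi / phi 1 is an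
     F-algebra endomorphism of L.  Such a map is an element of the Galois
     group Gal(L / F), which is cyclic, generated by the Frobenius
     automorphism mu |-> mu^q of order m; hence psi mu = mu^(q^j), j < m. *)

Section FrobeniusGenerator.
Variables (F : finFieldType) (L : splittingFieldType F).

Definition frobenius : gal_of {:L} :=
  s2val (finField_galois_generator (sub1v {:L})).

Lemma gal_frobenius : ('Gal({:L} / 1) = <[frobenius]>)%g.
Proof.
by rewrite /frobenius; case: (finField_galois_generator _) => alpha /= /eqP.
Qed.

Lemma frobeniusE (x : L) : frobenius x = x ^+ #|F|.
Proof.
rewrite /frobenius; case: (finField_galois_generator _) => alpha _ Dalpha /=.
by rewrite Dalpha ?memvf // dimv1 expn1.
Qed.

Lemma frobeniusXE (k : nat) (x : L) : (frobenius ^+ k)%g x = x ^+ (#|F| ^ k).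
Proof.
elim: k x => [|k IHk] x; first by rewrite gal_id expn0 expr1.
by rewrite expgSr galM ?memvf // IHk frobeniusE expnSr exprM.
Qed.

Lemma order_frobenius : #[frobenius]%g = \dim {:L}.
Proof.
rewrite orderE -gal_frobenius -galois_dim ?finField_galois ?sub1v //.
by rewrite dimv1 divn1.
Qed.

Lemma algebra_endo_frobenius (psi : L -> L) :
  (forall x y, psi (x - y) = psi x - psi y) ->
  (forall (a : F) x, psi (a *: x) = a *: psi x) ->
  (forall x y, psi (x * y) = psi x * psi y) -> psi 1 = 1 ->
  exists j : 'I_(\dim {:L}), forall x, psi x = x ^+ (#|F| ^ j).
Proof.
move=> psiB psiZ psiM psi1.
pose psiL : {linear L -> L} :=
  HB.pack psi (GRing.isZmodMorphism.Build _ _ psi psiB)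
              (GRing.isScalable.Build _ _ _ _ psi psiZ).
have /kAut_to_gal[g galg Dg] : kAut 1 {:L} (linfun psiL).
  rewrite kAutfE; apply/kHomP_tmp.
  by split=> [x /vlineP[a ->] | x y _ _]; rewrite !lfunE //= psiZ psi1.
move: galg; rewrite gal_frobenius => /cycleP[i Dgi].
have lt_i : (i %% #[frobenius]%g < \dim {:L})%N.
  by rewrite -order_frobenius ltn_pmod ?order_gt0.
exists (Ordinal lt_i) => x /=.
by rewrite -[psi x]/(psiL x) -lfunE Dg ?memvf // Dgi -expg_mod_order frobeniusXE.
Qed.

End FrobeniusGenerator.

Section SemilinearMaps.
Variables (L : fieldType) (phi tau tau' : L -> L).

Hypothesis phi_semilinear : forall a x y, phi (a * x + y) = tau a * phi x + phi y.
Hypothesis phi0 : phi 0 = 0.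
Hypothesis tauK : cancel tau' tau.

Lemma map_semilinear_sum n k (a : 'I_k -> L) (X : 'I_k -> 'rV[L]_n) :
  map_mx phi (\sum_(i < k) a i *: X i) = \sum_(i < k) tau (a i) *: map_mx phi (X i).
Proof.
elim: k a X => [|k IHk] a X.
  by rewrite !big_ord0; apply/matrixP => r s; rewrite !mxE phi0.
rewrite !big_ord_recr /= -IHk.
by apply/matrixP => r s; rewrite !mxE addrC phi_semilinear addrC.
Qed.

(* A semilinear map is linear on every code: phi(C) is spanned by the images
   of a basis of C. *)
Lemma semilinear_linear_on n (C : {vspace 'rV[L]_n}) : linear_on phi C.
Proof.
pose X := map_tuple (cwise phi) (vbasis C).
have XE (i : 'I_(\dim C)) : X`_i = cwise phi (vbasis C)`_i.
  by rewrite (nth_map 0) ?size_tuple.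
have mem_basis (i : 'I_(\dim C)) : (vbasis C)`_i \in C.
  by apply: vbasis_mem; apply: mem_nth; rewrite size_tuple.
exists <<X>>%VS => v; split.
- move=> /coord_span ->; exists (\sum_i tau' (coord X i v) *: (vbasis C)`_i).
    by apply: memv_suml => i _; apply/memvZ/mem_basis.
  by rewrite /cwise map_semilinear_sum; apply: eq_bigr => i _; rewrite tauK XE.
- move=> [c /coord_vbasis -> ->]; rewrite /cwise map_semilinear_sum.
  apply: memv_suml => i _; apply/memvZ/memv_span.
  by rewrite -/(cwise _ _) -XE mem_nth ?size_tuple.
Qed.

End SemilinearMaps.

Lemma linear_on_lines_twisted_mul (L : fieldType) (phi : L -> L) :
  injective phi -> phi 1 != 0 ->
  (forall C : {vspace 'rV[L]_2}, linear_on phi C) ->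
  forall l a, phi (l * a) * phi 1 = phi l * phi a.
Proof.
move=> phi_inj phi1 lin2 l a.
pose r : 'rV[L]_2 := \row_i (if i == ord0 then 1 else a).
have [D HD] := lin2 <[r]>%VS.
have phi_r : cwise phi r \in D by apply/HD; exists r => //; apply: memv_line.
have [c /vlineP[mu ->] E] := (HD _).1 (memvZ (phi l / phi 1) phi_r).
have E0 := congr1 (fun m : 'rV[L]_2 => m ord0 ord0) E.
have E1 := congr1 (fun m : 'rV[L]_2 => m ord0 (lift ord0 ord0)) E.
move: E0 E1; rewrite /cwise !mxE /= mulr1 divfK // => /phi_inj <- <-.
by rewrite mulrAC divfK.
Qed.

Section FqLinearAutomorphism.
Context {F : finFieldType} {L : fieldExtType F} {phi : L -> L}.
Hypothesis phi_aut : Fq_lin_aut phi.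

Lemma Fq_lin_autD x y : phi (x + y) = phi x + phi y.
Proof. by have := phi_aut.1 1 x y; rewrite !scale1r. Qed.

Lemma Fq_lin_aut0 : phi 0 = 0.
Proof. by apply: (addrI (phi 0)); rewrite -Fq_lin_autD !addr0. Qed.

Lemma Fq_lin_autB x y : phi (x - y) = phi x - phi y.
Proof. by apply/eqP; rewrite eq_sym subr_eq -Fq_lin_autD subrK. Qed.

Lemma Fq_lin_autZ (a : F) x : phi (a *: x) = a *: phi x.
Proof. by rewrite -[a *: x]addr0 phi_aut.1 Fq_lin_aut0 addr0. Qed.

Lemma Fq_lin_aut_inj : injective phi.
Proof. exact: bij_inj phi_aut.2. Qed.

Lemma Fq_lin_aut1 : phi 1 != 0.
Proof.
by apply: contraNneq (oner_neq0 L) => phi1; apply/eqP/Fq_lin_aut_inj;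
  rewrite phi1 Fq_lin_aut0.
Qed.

End FqLinearAutomorphism.

Theorem mainTheorem4 (F : finFieldType) (L : fieldExtType F) (phi : L -> L) :
  Fq_lin_aut phi ->
  (fully_linear phi <->
   exists2 beta : L, beta != 0 &
     exists j : 'I_(\dim {:L}), forall mu : L, phi mu = beta * mu ^+ (#|F| ^ j)).
Proof.
move=> phi_aut; have phi1 := Fq_lin_aut1 phi_aut.
pose LS := FinSplittingFieldType F L.
split=> [phi_full | [beta _ [j Dphi]] n _ C].
- (* psi := phi / phi 1 is an F-algebra endomorphism, hence a Frobenius power *)
  have twisted := linear_on_lines_twisted_mul (Fq_lin_aut_inj phi_aut) phi1
    (phi_full 2%N isT).
  pose psi x := phi x / phi 1.
  have [|||j Dpsi] := @algebra_endo_frobenius F LS psi _ _ _ (divff phi1).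
  + by move=> x y; rewrite /psi Fq_lin_autB // mulrBl.
  + by move=> a x; rewrite /psi Fq_lin_autZ // scalerAl.
  + by move=> x y; rewrite /psi mulf_div -twisted invfM mulrA mulfK.
  by exists (phi 1) => //; exists j => mu; rewrite -Dpsi /psi mulrC divfK.
- (* phi is semilinear for the Galois automorphism frobenius ^+ j *)
  pose g := (frobenius LS ^+ j)%g.
  have gE (x : L) : g x = x ^+ (#|F| ^ j) by exact: frobeniusXE.
  apply: (@semilinear_linear_on L phi g (g^-1)%g).
  + by move=> a x y; rewrite !Dphi -!gE rmorphD rmorphM mulrDr mulrCA.
  + by rewrite Dphi -gE rmorph0 mulr0.
  + by move=> x; rewrite -galM ?memvf // mulVg gal_id.
Qed.
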